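(* Let $p$ be an odd prime, $R=F_p+vF_p$ with $v^2=v$, let $\vartheta=1-2v$ or $\vartheta=-1+2v$, and let $\phi_\vartheta:R^n\to F_p^{2n}$ be the Gray map. Let $\alpha$ be the $\vartheta$-constacyclic shift of $R^n$, $\alpha(c_0,\dots,c_{n-1})=(\vartheta c_{n-1},c_0,\dots,c_{n-2})$, and $\beta$ the cyclic shift of $F_p^{2n}$, $\beta(a_0,\dots,a_{2n-1})=(a_{2n-1},a_0,\dots,a_{2n-2})$. Then $\phi_\vartheta\alpha=\beta\phi_\vartheta$.
   Context: Write $\vartheta=\lambda+v\mu$ with $\lambda,\mu\in F_p$. The Gray map $\phi_\vartheta:R^n\to F_p^{2n}$ is defined for $c=(c_0,\dots,c_{n-1})$ with $c_i=r_i+vq_i$ ($r_i,q_i\in F_p$) by $\phi_\vartheta(c)=(\lambda(\lambda+\mu)q_0,\dots,\lambda(\lambda+\mu)q_{n-1},\,-\mu r_0-(\lambda+\mu)q_0,\dots,-\mu r_{n-1}-(\lambda+\mu)q_{n-1})$. *)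

From mathcomp Require Import all_boot all_algebra.
Set Implicit Arguments. Unset Strict Implicit. Unset Printing Implicit Defensive.
Import GRing.Theory.
Local Open Scope ring_scope.

(* An element r + v q is represented
   by the pair (r, q).  Addition is componentwise and multiplication is
   (r + v q)(r' + v q') = r r' + v (r q' + q r' + q q')  (using v^2 = v). *)
Definition Rp (p : nat) : Type := ('F_p * 'F_p)%type.

Definition Radd (p : nat) (a b : Rp p) : Rp p := (a.1 + b.1, a.2 + b.2).
Definition Rmul (p : nat) (a b : Rp p) : Rp p :=
  (a.1 * b.1, a.1 * b.2 + a.2 * b.1 + a.2 * b.2).

Definition const_shift (p n : nat) (theta : Rp p) (c : 'rV[Rp p]_n) : 'rV[Rp p]_n :=
  \row_(j < n) (if val j == 0%N then Rmul theta (c 0 (ord_pred j))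
                else c 0 (ord_pred j)).

Definition cyc_shift (p m : nat) (a : 'rV['F_p]_m) : 'rV['F_p]_m :=
  \row_(j < m) a 0 (ord_pred j).

Definition gray (p n : nat) (theta : Rp p) (c : 'rV[Rp p]_n) : 'rV['F_p]_(n + n) :=
  let lam := theta.1 in let mu := theta.2 in
  \row_(k < n + n)
    match split k with
    | inl i => lam * (lam + mu) * (c 0 i).2
    | inr i => - mu * (c 0 i).1 - (lam + mu) * (c 0 i).2
    end.

(* Write theta = lam + v mu and let f(r + v q) = lam (lam + mu) q and
   g(r + v q) = - mu r - (lam + mu) q be the two halves of the Gray map.
   When lam^2 = 1 and mu = -2 lam (i.e. theta = +-(1 - 2v)), multiplication
   by theta exchanges them: f(theta x) = g x and g(theta x) = f x.  On the
   index side, the cyclic predecessor in 'I_(n + n) of the head of either half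
   is the last index of the other half, and is the predecessor within the same
   half otherwise; so the cyclic shift of phi(c) carries the wrapped-around
   coordinate exactly as the theta-multiplied one in phi(alpha c). *)

From mathcomp Require Import all_boot all_algebra.
From mathcomp Require Import ring.
Local Open Scope ring_scope.
Import GRing.Theory.

Lemma ord_pred_val {m} (i : 'I_m) :
  ord_pred i = (if i == 0 :> nat then m.-1 else i.-1)%N :> nat.
Proof.
case: i => [[|j] lt_j_m] /=; first by rewrite add0n modn_small // prednK.
by rewrite modnDr modn_small // ltnW.
Qed.

Lemma ord_pred_lshift n (i : 'I_n) :
  ord_pred (lshift n i) =
    if i == 0 :> nat then rshift n (ord_pred i) else lshift n (ord_pred i).
Proof.
have := ord_pred_val i; move: (ord_pred i) => j.
case: i => [[|i] lt_i_n] /= ji; apply: ord_inj; rewrite [LHS]ord_pred_val /= ji //.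
by rewrite -!subn1 addnBA.
Qed.

Lemma ord_pred_rshift n (i : 'I_n) :
  ord_pred (rshift n i) =
    if i == 0 :> nat then lshift n (ord_pred i) else rshift n (ord_pred i).
Proof.
have := ord_pred_val i; move: (ord_pred i) => j.
case: i => [[|i] lt_i_n] /= ji; apply: ord_inj; rewrite [LHS]ord_pred_val /= ji.
  by rewrite addn0 gtn_eqF.
by rewrite addnS.
Qed.

Section GrayHalves.

Variables (p : nat) (theta : Rp p).

Definition gray_fst (x : Rp p) : 'F_p := theta.1 * (theta.1 + theta.2) * x.2.
Definition gray_snd (x : Rp p) : 'F_p := - theta.2 * x.1 - (theta.1 + theta.2) * x.2.

Lemma gray_lshift n (c : 'rV[Rp p]_n) (i : 'I_n) :
  gray theta c 0 (lshift n i) = gray_fst (c 0 i).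
Proof. by rewrite mxE (unsplitK (inl _ i)). Qed.

Lemma gray_rshift n (c : 'rV[Rp p]_n) (i : 'I_n) :
  gray theta c 0 (rshift n i) = gray_snd (c 0 i).
Proof. by rewrite mxE (unsplitK (inr _ i)). Qed.

Hypotheses (theta1_sqr : theta.1 ^+ 2 = 1) (theta2_def : theta.2 = - 2 * theta.1).

Lemma gray_fst_mul x : gray_fst (Rmul theta x) = gray_snd x.
Proof.
rewrite /gray_fst /gray_snd /Rmul /=.
by move: theta.1 theta.2 theta1_sqr theta2_def => lam mu lam_sqr ->; ring: lam_sqr.
Qed.

Lemma gray_snd_mul x : gray_snd (Rmul theta x) = gray_fst x.
Proof.
rewrite /gray_fst /gray_snd /Rmul /=.
by move: theta.1 theta.2 theta1_sqr theta2_def => lam mu lam_sqr ->; ring: lam_sqr.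
Qed.

End GrayHalves.

Theorem lemma3p12 (p : nat) (hp : prime p) (hodd : odd p) (n : nat)
  (theta : Rp p)
  (htheta : theta = (1, -2) \/ theta = (-1, 2))
  (c : 'rV[Rp p]_n) :
  gray theta (const_shift theta c) = cyc_shift (gray theta c).
Proof.
have theta1_sqr : theta.1 ^+ 2 = 1 by case: htheta => -> /=; ring.
have theta2_def : theta.2 = - 2 * theta.1 by case: htheta => -> /=; ring.
apply/rowP => k; rewrite [RHS]mxE -(splitK k).
case: (split k) => i /=.
- rewrite gray_lshift mxE ord_pred_lshift.
  by case: eqP => _; rewrite ?gray_rshift ?gray_lshift ?gray_fst_mul.
- rewrite gray_rshift mxE ord_pred_rshift.
  by case: eqP => _; rewrite ?gray_rshift ?gray_lshift ?gray_snd_mul.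
Qed.
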